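(* Let $(\mathsf X_1,\mathsf X_2)\sim p(x_1,x_2)$ be a pair of random variables on finite alphabets and let \[ M_1=\max_{\mathsf X_1-\mathsf U-\mathsf X_2}\tfrac12\min\{H(\mathsf X_1|\mathsf U),H(\mathsf X_2|\mathsf U)\}, \] the maximum being over auxiliary random variables $\mathsf U$ (given by $p(u|x_1,x_2)$) such that $\mathsf X_1-\mathsf U-\mathsf X_2$ is a Markov chain. Then for every $M\in[0,M_1]\cup[H(\mathsf X_1,\mathsf X_2)-2M_1,\,H(\mathsf X_1,\mathsf X_2)]$ we have $R^{LB}_{GW}(M)=R^{LB}(M)$, where \[ R^{LB}(M)=\inf\Big\{R:\; R\ge H(\mathsf X_1,\mathsf X_2)-2M,\; R\ge \tfrac12\big(H(\mathsf X_1,\mathsf X_2)-M\big),\; R\ge \tfrac12\big(H(\mathsf X_1,\mathsf X_2)+\max\{H(\mathsf X_1),H(\mathsf X_2)\}\big)-M\Big\}, \] and $R^{LB}_{GW}(M)=\inf_{\mathsf U}R^{LB}_{GW}(M,\mathsf U)$, the infimum over all conditional pmfs $p(u|x_1,x_2)$ with $|\mathcal U|\le|\mathcal X_1|\cdot|\mathcal X_2|+2$, with \[ \begin{aligned} R^{LB}_{GW}(M,\mathsf U)=\inf\Big\{R:\;& R\ge I(\mathsf X_1,\mathsf X_2;\mathsf U)+H(\mathsf X_1|\mathsf U)+H(\mathsf X_2|\mathsf U)-2M,\\ & R\ge \tfrac12\big(I(\mathsf X_1,\mathsf X_2;\mathsf U)+H(\mathsf X_1|\mathsf U)+H(\mathsf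 X_2|\mathsf U)-M\big),\\ & R\ge I(\mathsf X_1,\mathsf X_2;\mathsf U)+H(\mathsf X_1|\mathsf U)+\tfrac12H(\mathsf X_2|\mathsf U)-M,\\ & R\ge I(\mathsf X_1,\mathsf X_2;\mathsf U)+\tfrac12H(\mathsf X_1|\mathsf U)+H(\mathsf X_2|\mathsf U)-M\Big\}. \end{aligned} \]
   Context: $R^{LB}(M)$ is a lower bound on the optimal peak rate-memory function of a two-receiver, two-file broadcast caching network with files generated by the 2-DMS $(\mathsf X_1,\mathsf X_2)$ and per-receiver (normalized) cache capacity $M$, and $R^{LB}_{GW}(M)$ is a lower bound on the corresponding function restricted to Gray-Wyner based two-step schemes; for the statement only their explicit formulas above matter. Entropies and mutual information are the standard Shannon quantities. *)

From HB Require Import structures.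
From mathcomp Require Import all_boot all_order all_algebra.
From mathcomp Require Import all_classical all_reals all_analysis.
Set Implicit Arguments. Unset Strict Implicit. Unset Printing Implicit Defensive.
Import Order.TTheory GRing.Theory Num.Theory.
Local Open Scope ring_scope.
Local Open Scope classical_set_scope.

Section Info.
Variable R : realType.

(* base-2 logarithm; ln 0 = 0 so 0 * log2 0 = 0 *)
Definition log2 (x : R) : R := ln x / ln 2.

Definition Hent (T : finType) (f : T -> R) : R := - \sum_(t : T) f t * log2 (f t).

Definition is_pmf2 (X1 X2 : finType) (p : X1 -> X2 -> R) : Prop :=
  (forall x1 x2, 0 <= p x1 x2) /\ \sum_(x1 : X1) \sum_(x2 : X2) p x1 x2 = 1.

Definition is_cond_pmf (X1 X2 U : finType) (q : X1 -> X2 -> U -> R) : Prop :=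
  (forall x1 x2 u, 0 <= q x1 x2 u) /\ (forall x1 x2, \sum_(u : U) q x1 x2 u = 1).

Variables (X1 X2 U : finType) (p : X1 -> X2 -> R) (q : X1 -> X2 -> U -> R).

Definition P12U (x1 : X1) (x2 : X2) (u : U) : R := p x1 x2 * q x1 x2 u.
Definition P1U (x1 : X1) (u : U) : R := \sum_(x2 : X2) P12U x1 x2 u.
Definition P2U (x2 : X2) (u : U) : R := \sum_(x1 : X1) P12U x1 x2 u.
Definition PU (u : U) : R := \sum_(x1 : X1) \sum_(x2 : X2) P12U x1 x2 u.
Definition P1 (x1 : X1) : R := \sum_(x2 : X2) p x1 x2.
Definition P2 (x2 : X2) : R := \sum_(x1 : X1) p x1 x2.

Definition H12 : R := Hent (fun x : X1 * X2 => p x.1 x.2).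
Definition H1 : R := Hent P1.
Definition H2 : R := Hent P2.
Definition HU : R := Hent PU.
Definition H1U : R := Hent (fun x : X1 * U => P1U x.1 x.2).
Definition H2U : R := Hent (fun x : X2 * U => P2U x.1 x.2).
Definition H12U : R := Hent (fun x : X1 * X2 * U => P12U x.1.1 x.1.2 x.2).
Definition H1_U : R := H1U - HU.
Definition H2_U : R := H2U - HU.
Definition I12_U : R := H12 + HU - H12U.

Definition markov_1U2 : Prop :=
  forall x1 x2 u, P12U x1 x2 u * PU u = P1U x1 u * P2U x2 u.

Definition RLBGW_U (M : R) : R :=
  inf [set r : R |
    [/\ r >= I12_U + H1_U + H2_U - 2 * M,
        r >= (I12_U + H1_U + H2_U - M) / 2,
        r >= I12_U + H1_U + H2_U / 2 - M &
        r >= I12_U + H1_U / 2 + H2_U - M]].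
End Info.

Arguments H12 {R X1 X2}.
Arguments H1 {R X1 X2}.
Arguments H2 {R X1 X2}.

(* M_1 = max over U with X1 - U - X2 of (1/2) min{H(X1|U), H(X2|U)}
   (formalized as the supremum, over all finite alphabets U and all
   conditional pmfs p(u|x1,x2) making X1 - U - X2 Markov) *)
Definition M1 (R : realType) (X1 X2 : finType) (p : X1 -> X2 -> R) : R :=
  sup [set v : R | exists (U : finType) (q : X1 -> X2 -> U -> R),
         [/\ is_cond_pmf q, markov_1U2 p q &
             v = Num.min (H1_U p q) (H2_U p q) / 2]].

Definition RLB (R : realType) (X1 X2 : finType) (p : X1 -> X2 -> R) (M : R) : R :=
  inf [set r : R |
    [/\ r >= H12 p - 2 * M,
        r >= (H12 p - M) / 2 &
        r >= (H12 p + Num.max (H1 p) (H2 p)) / 2 - M]].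

Definition RLBGW (R : realType) (X1 X2 : finType) (p : X1 -> X2 -> R) (M : R) : R :=
  inf [set r : R | exists (U : finType) (q : X1 -> X2 -> U -> R),
         [/\ (#|U| <= #|X1| * #|X2| + 2)%N, is_cond_pmf q &
             r = RLBGW_U p q M]].

(* Both rates are maxima of finitely many affine functions of M.
   Lower bound: for every auxiliary U, I(X1,X2;U) + H(X1|U) + H(X2|U) exceeds
   H(X1,X2) by I(X1;X2|U) >= 0, and I(X1,X2;U) + H(Xi|U) exceeds H(Xi) by
   I(Xj;U|Xi) >= 0, so each constraint of R^LB is implied by one of R^LB_GW(., U).
   Upper bound: if X1 - U - X2 is Markov then I(X1;X2|U) = 0, and R^LB_GW(M, U)
   <= R^LB(M) as soon as M <= m or M >= H(X1,X2) - 2m, where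
   m = min(H(X1|U), H(X2|U)) / 2; take U with m close to M_1.  The bound on the
   alphabet of U is free: writing p(x1,x2) = sum_u p(u) p(x1|u) p(x2|u),
   Caratheodory's theorem replaces p(u) by weights on at most |X1||X2| + 2 points
   that preserve p and sum_u p(u) H(Xi|U=u), hence the Markov property and both
   H(Xi|U). *)

From HB Require Import structures.
From mathcomp Require Import all_boot all_order all_algebra.
From mathcomp Require Import all_classical all_reals all_analysis.
From mathcomp Require Import ring lra.
Import Order.TTheory GRing.Theory Num.Theory.
Set Implicit Arguments. Unset Strict Implicit.
Local Open Scope ring_scope.

Section Entropy.
Variable R : realType.

Lemma HentE (T : finType) (f : T -> R) : Hent f = - (\sum_t f t * ln (f t)) / ln 2.
Proof.
by rewrite /Hent /log2 mulNr mulr_suml; under eq_bigr do rewrite mulrA.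
Qed.

Lemma Hent_reindex (T T' : finType) (f : T -> R) (g : T' -> R) (h : T' -> T) :
  bijective h -> g =1 f \o h -> Hent g = Hent f.
Proof.
move=> h_bij gE; rewrite /Hent (reindex h) /=; last exact: onW_bij.
by under eq_bigr do rewrite gE.
Qed.

Lemma Hent_swap (A B : finType) (f : A -> B -> R) :
  Hent (fun x : B * A => f x.2 x.1) = Hent (fun x : A * B => f x.1 x.2).
Proof.
apply: (Hent_reindex (h := fun x : B * A => (x.2, x.1))) => //.
by exists (fun x : A * B => (x.2, x.1)) => -[].
Qed.

Lemma Hent_pair_unit (T : finType) (f : T -> R) :
  Hent (fun x : T * unit => f x.1) = Hent f.
Proof.
by apply: (Hent_reindex (h := @fst T unit)) => //; exists (fun t => (t, tt)) => // -[? []].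
Qed.

Lemma Hent_unit1 : Hent (fun _ : unit => 1 : R) = 0.
Proof. by rewrite /Hent /log2 ln1 big1 ?oppr0 // => _ _; rewrite !mul0r mulr0. Qed.

Lemma xlnxM (x y : R) : 0 <= x -> 0 <= y ->
  x * y * ln (x * y) = y * (x * ln x) + x * (y * ln y).
Proof.
rewrite le0r => /predU1P[-> _|x_gt0]; first by rewrite !mul0r mulr0 add0r.
rewrite le0r => /predU1P[->|y_gt0]; first by rewrite !(mulr0, mul0r) addr0.
by rewrite lnM ?posrE //; ring.
Qed.

Lemma ln_le_subr1 {x : R} : 0 < x -> ln x <= x - 1.
Proof. by move=> x_gt0; have := @le_ln1Dx R (x - 1); rewrite (addrC 1) subrK; apply; lra. Qed.

Lemma xlnx_div_ge (x t : R) : 0 <= x -> 0 <= t -> (0 < x -> 0 < t) ->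
  x - t <= x * ln (x / t).
Proof.
rewrite le0r => /predU1P[-> t_ge0 _|x_gt0 _ /(_ x_gt0) t_gt0].
  by rewrite mul0r sub0r oppr_le0.
have := ln_le_subr1 (divr_gt0 t_gt0 x_gt0).
rewrite -[x / t]invf_div lnV ?posrE ?divr_gt0 // => le_ln.
have -> : x - t = x * (1 - t / x) by field; rewrite gt_eqF.
by rewrite ler_pM2l //; lra.
Qed.

Lemma Hent_mixture (A U : finType) (w : U -> R) (a : U -> A -> R) :
  (forall u, 0 <= w u) -> (forall u x, 0 <= a u x) -> (forall u, \sum_x a u x = 1) ->
  Hent (fun x : A * U => w x.2 * a x.2 x.1) = Hent w + \sum_u w u * Hent (a u).
Proof.
move=> w_ge0 a_ge0 a_sum1.
under [in RHS]eq_bigr do rewrite HentE mulrA mulrN.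
rewrite !HentE -(pair_bigA _ (fun x u => w u * a u x * ln (w u * a u x))) exchange_big /=.
under eq_bigr => u _ do under eq_bigr => x _ do rewrite xlnxM //.
under eq_bigr do rewrite big_split /= -mulr_suml a_sum1 mul1r -mulr_sumr.
by rewrite big_split /= -mulr_suml sumrN; ring.
Qed.
End Entropy.

Lemma sum3E (V : nmodType) (A B C : finType) (F : A -> B -> C -> V) :
  \sum_a \sum_b \sum_c F a b c = \sum_(x : A * B * C) F x.1.1 x.1.2 x.2.
Proof.
by rewrite (pair_bigA _ (fun a b => \sum_c F a b c)) (pair_bigA _ (fun ab c => F ab.1 ab.2 c)).
Qed.

Lemma sum3_outer (V : nmodType) (A B C : finType) (F : A -> B -> C -> V) :
  \sum_(x : A * B * C) F x.1.1 x.1.2 x.2 = \sum_c \sum_a \sum_b F a b c.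
Proof. by rewrite -sum3E; under eq_bigr do rewrite exchange_big; rewrite exchange_big. Qed.

Section ConditionalMutualInformation.
Variables (R : realType) (A B C : finType).
Variables (r : A -> B -> C -> R) (rAC : A -> C -> R) (rBC : B -> C -> R) (rC : C -> R).
Hypothesis r_ge0 : forall a b c, 0 <= r a b c.
Hypothesis rACE : forall a c, \sum_b r a b c = rAC a c.
Hypothesis rBCE : forall b c, \sum_a r a b c = rBC b c.
Hypothesis rCE : forall c, \sum_a rAC a c = rC c.

Let rABC (x : A * B * C) := r x.1.1 x.1.2 x.2.
(* [rind] is the coupling of [rAC] and [rBC] under which A and B are independent
   given C; [cmi] is the relative entropy (in nats) of [r] with respect to it. *)
Let rind (x : A * B * C) := rAC x.1.1 x.2 * rBC x.1.2 x.2 / rC x.2.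
Let cmi := \sum_x rABC x * ln (rABC x / rind x).

Let rAC_ge0 a c : 0 <= rAC a c.
Proof. by rewrite -rACE sumr_ge0. Qed.

Let rBC_ge0 b c : 0 <= rBC b c.
Proof. by rewrite -rBCE sumr_ge0. Qed.

Let rC_ge0 c : 0 <= rC c.
Proof. by rewrite -rCE sumr_ge0. Qed.

Let sum_rBC c : \sum_b rBC b c = rC c.
Proof.
rewrite -rCE; under eq_bigr do rewrite -rBCE.
by rewrite exchange_big; under eq_bigr do rewrite rACE.
Qed.

Let marginals_gt0 {a b c} : 0 < r a b c -> [/\ 0 < rAC a c, 0 < rBC b c & 0 < rC c].
Proof.
move=> r_gt0.
have rAC_gt0 : 0 < rAC a c.
  by rewrite -rACE (lt_le_trans r_gt0) // (bigD1 b) //= lerDl sumr_ge0.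
have rBC_gt0 : 0 < rBC b c.
  by rewrite -rBCE (lt_le_trans r_gt0) // (bigD1 a) //= lerDl sumr_ge0.
split=> //.
by rewrite -rCE (lt_le_trans rAC_gt0) // (bigD1 a) //= lerDl sumr_ge0.
Qed.

Let rind_gt0 {x} : 0 < rABC x -> 0 < rind x.
Proof.
case: x => [[a b] c] /marginals_gt0[? ? ?].
by rewrite /rind /= divr_gt0 ?mulr_gt0.
Qed.

Let sum_rind : \sum_x rind x = \sum_x rABC x.
Proof.
rewrite (sum3_outer (fun a b c => rAC a c * rBC b c / rC c)) (sum3_outer r).
apply: eq_bigr => c _.
under eq_bigr do rewrite -mulr_suml -mulr_sumr.
rewrite -mulr_suml -mulr_suml rCE sum_rBC.
under eq_bigr do rewrite rACE.
rewrite rCE; have [->|rC_neq0] := eqVneq (rC c) 0; first by rewrite !mul0r.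
by rewrite mulfK.
Qed.

Let cmi_ge0 : 0 <= cmi.
Proof.
rewrite -(subrr (\sum_x rABC x)) -{2}sum_rind -sumrB /cmi.
apply: ler_sum => x _; apply: xlnx_div_ge; first exact: r_ge0.
  by rewrite /rind mulr_ge0 ?invr_ge0 // mulr_ge0.
exact: rind_gt0.
Qed.

Let cmi_eq0 : (forall a b c, r a b c * rC c = rAC a c * rBC b c) -> cmi = 0.
Proof.
move=> markov; apply: big1 => -[[a b] c] _.
have [->|r_neq0] := eqVneq (rABC (a, b, c)) 0; first by rewrite !mul0r.
have r_gt0 : 0 < rABC (a, b, c) by rewrite lt0r r_neq0 r_ge0.
have rC_neq0 : rC c != 0.
  have := rind_gt0 r_gt0; rewrite /rind /=.
  by apply: contraTneq => ->; rewrite invr0 mulr0 ltxx.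
by rewrite /rind /rABC /= -markov mulfK // divff ?ln1 ?mulr0.
Qed.

Let sum_rAC_ln : \sum_(x : A * C) rAC x.1 x.2 * ln (rAC x.1 x.2) =
  \sum_x rABC x * ln (rAC x.1.1 x.2).
Proof.
rewrite -(pair_bigA _ (fun a c => rAC a c * ln (rAC a c))).
rewrite -(sum3E (fun a b c => r a b c * ln (rAC a c))).
apply: eq_bigr => a _; rewrite [RHS]exchange_big; apply: eq_bigr => c _.
by rewrite -mulr_suml rACE.
Qed.

Let sum_rBC_ln : \sum_(x : B * C) rBC x.1 x.2 * ln (rBC x.1 x.2) =
  \sum_x rABC x * ln (rBC x.1.2 x.2).
Proof.
rewrite -(pair_bigA _ (fun b c => rBC b c * ln (rBC b c))).
rewrite -(sum3E (fun a b c => r a b c * ln (rBC b c))) [RHS]exchange_big.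
apply: eq_bigr => b _; rewrite [RHS]exchange_big; apply: eq_bigr => c _.
by rewrite -mulr_suml rBCE.
Qed.

Let sum_rC_ln : \sum_c rC c * ln (rC c) = \sum_x rABC x * ln (rC x.2).
Proof.
rewrite (sum3_outer (fun a b c => r a b c * ln (rC c))); apply: eq_bigr => c _.
under eq_bigr do rewrite -mulr_suml rACE.
by rewrite -mulr_suml rCE.
Qed.

Let cmi_termE x : rABC x * ln (rABC x / rind x) =
  rABC x * ln (rABC x) + rABC x * ln (rC x.2)
  - rABC x * ln (rAC x.1.1 x.2) - rABC x * ln (rBC x.1.2 x.2).
Proof.
case: x => [[a b] c]; rewrite /rind /rABC /=.
have [->|r_neq0] := eqVneq (r a b c) 0; first by rewrite !mul0r !subr0 addr0.
have r_gt0 : 0 < r a b c by rewrite lt0r r_neq0 r_ge0.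
have [? ? ?] := marginals_gt0 r_gt0.
by rewrite ln_div ?lnM ?lnV ?posrE ?divr_gt0 ?mulr_gt0 ?invr_gt0 //; ring.
Qed.

Let Hent_cmiE :
  Hent (fun x : A * C => rAC x.1 x.2) + Hent (fun x : B * C => rBC x.1 x.2)
  - Hent rC - Hent rABC = cmi / ln 2.
Proof.
rewrite !HentE sum_rAC_ln sum_rBC_ln sum_rC_ln /cmi (eq_bigr _ (fun x _ => cmi_termE x)).
by rewrite !sumrB big_split /=; ring.
Qed.

Lemma cond_mutual_info_ge0 :
  0 <= Hent (fun x : A * C => rAC x.1 x.2) + Hent (fun x : B * C => rBC x.1 x.2)
       - Hent rC - Hent (fun x : A * B * C => r x.1.1 x.1.2 x.2).
Proof. by rewrite Hent_cmiE divr_ge0 ?cmi_ge0 // ln_ge0 // ler1n. Qed.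

Lemma cond_mutual_info_eq0 : (forall a b c, r a b c * rC c = rAC a c * rBC b c) ->
  Hent (fun x : A * C => rAC x.1 x.2) + Hent (fun x : B * C => rBC x.1 x.2)
  - Hent rC - Hent (fun x : A * B * C => r x.1.1 x.1.2 x.2) = 0.
Proof. by move=> markov; rewrite Hent_cmiE cmi_eq0 ?mul0r. Qed.
End ConditionalMutualInformation.

Section GrayWynerInequalities.
Variables (R : realType) (X1 X2 U : finType) (p : X1 -> X2 -> R) (q : X1 -> X2 -> U -> R).
Hypothesis p_ge0 : forall x1 x2, 0 <= p x1 x2.
Hypothesis q_cond : is_cond_pmf q.

Lemma P12U_ge0 x1 x2 u : 0 <= P12U p q x1 x2 u.
Proof. by rewrite mulr_ge0 //; case: q_cond. Qed.

Lemma sum_P12U x1 x2 : \sum_u P12U p q x1 x2 u = p x1 x2.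
Proof. by rewrite -mulr_sumr; case: q_cond => _ ->; rewrite mulr1. Qed.

Lemma H12_le_I12_U_H1_U_H2_U : H12 p <= I12_U p q + H1_U p q + H2_U p q.
Proof.
have : 0 <= H1U p q + H2U p q - HU p q - H12U p q.
  exact: cond_mutual_info_ge0 P12U_ge0 _ _ _.
by rewrite /I12_U /H1_U /H2_U; lra.
Qed.

Lemma markov_I12_U_H1_U_H2_U :
  markov_1U2 p q -> I12_U p q + H1_U p q + H2_U p q = H12 p.
Proof.
move=> markov.
have : H1U p q + H2U p q - HU p q - H12U p q = 0.
  exact: cond_mutual_info_eq0 P12U_ge0 _ _ _ markov.
by rewrite /I12_U /H1_U /H2_U; lra.
Qed.

Lemma H1_le_I12_U_H1_U : H1 p <= I12_U p q + H1_U p q.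
Proof.
have := cond_mutual_info_ge0 (r := fun x2 u x1 => P12U p q x1 x2 u)
  (rAC := fun x2 x1 => p x1 x2) (rBC := fun u x1 => P1U p q x1 u) (rC := P1 p)
  (fun x2 u x1 => P12U_ge0 x1 x2 u) (fun x2 x1 => sum_P12U x1 x2)
  (fun _ _ => erefl) (fun _ => erefl).
have -> : Hent (fun x : X2 * U * X1 => P12U p q x.2 x.1.1 x.1.2) = H12U p q.
  apply: (Hent_reindex (h := fun x => (x.2, x.1.1, x.1.2))) => //.
  by exists (fun y => (y.1.2, y.2, y.1.1)) => -[[]].
rewrite !Hent_swap -/(H12 p) -/(H1U p q) -/(H1 p).
by rewrite /I12_U /H1_U; lra.
Qed.

Lemma H2_le_I12_U_H2_U : H2 p <= I12_U p q + H2_U p q.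
Proof.
have := cond_mutual_info_ge0 (r := fun x1 u x2 => P12U p q x1 x2 u)
  (rAC := p) (rBC := fun u x2 => P2U p q x2 u) (rC := P2 p)
  (fun x1 u x2 => P12U_ge0 x1 x2 u) sum_P12U (fun _ _ => erefl) (fun _ => erefl).
have -> : Hent (fun x : X1 * U * X2 => P12U p q x.1.1 x.2 x.1.2) = H12U p q.
  apply: (Hent_reindex (h := fun x : X1 * U * X2 => (x.1.1, x.2, x.1.2))) => //.
  by exists (fun y : X1 * X2 * U => (y.1.1, y.2, y.1.2)) => -[[]].
rewrite Hent_swap -/(H12 p) -/(H2U p q) -/(H2 p).
by rewrite /I12_U /H2_U; lra.
Qed.

Lemma H1_U_le_H1 : \sum_x1 \sum_x2 p x1 x2 = 1 -> H1_U p q <= H1 p.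
Proof.
move=> p_sum1.
have P1UE x1 : \sum_u P1U p q x1 u = P1 p x1.
  by rewrite exchange_big; apply: eq_bigr => x2 _; rewrite sum_P12U.
have := cond_mutual_info_ge0 (r := fun x1 u (_ : unit) => P1U p q x1 u)
  (rAC := fun x1 _ => P1 p x1) (rBC := fun u _ => PU p q u) (rC := fun _ => 1)
  (fun x1 u _ => sumr_ge0 _ (fun x2 _ => P12U_ge0 x1 x2 u))
  (fun x1 _ => P1UE x1) (fun _ _ => erefl) (fun _ => p_sum1).
rewrite !Hent_pair_unit (Hent_pair_unit (fun x : X1 * U => P1U p q x.1 x.2)) Hent_unit1.
by rewrite -/(H1 p) -/(HU p q) -/(H1U p q) /H1_U; lra.
Qed.
End GrayWynerInequalities.

Lemma inf_least (R : realType) (E : set R) (m : R) : E m -> lbound E m -> inf E = m.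
Proof. by move=> Em m_lb; apply/eqP; rewrite eq_le ge_inf ?lb_le_inf //; exists m. Qed.

Section RateBounds.
Variables (R : realType) (X1 X2 U : finType) (p : X1 -> X2 -> R) (q : X1 -> X2 -> U -> R).
Variable M : R.

Let s1 := H12 p - 2 * M.
Let s2 := (H12 p - M) / 2.
Let s3 := (H12 p + Num.max (H1 p) (H2 p)) / 2 - M.
Let t1 := I12_U p q + H1_U p q + H2_U p q - 2 * M.
Let t2 := (I12_U p q + H1_U p q + H2_U p q - M) / 2.
Let t3 := I12_U p q + H1_U p q + H2_U p q / 2 - M.
Let t4 := I12_U p q + H1_U p q / 2 + H2_U p q - M.

Lemma RLBE : RLB p M = Num.max s1 (Num.max s2 s3).
Proof.
apply: inf_least => [|r [*]]; last by rewrite !ge_max; apply/and3P.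
by split; rewrite !le_max lexx ?orbT.
Qed.

Lemma RLBGW_UE : RLBGW_U p q M = Num.max t1 (Num.max t2 (Num.max t3 t4)).
Proof.
apply: inf_least => [|r [*]]; last by rewrite !ge_max; apply/and4P.
by split; rewrite !le_max lexx ?orbT.
Qed.

Lemma RLB_ge : [/\ s1 <= RLB p M, s2 <= RLB p M & s3 <= RLB p M].
Proof. by rewrite RLBE; split; rewrite !le_max lexx ?orbT. Qed.

Lemma RLB_le r : s1 <= r -> s2 <= r -> s3 <= r -> RLB p M <= r.
Proof. by rewrite RLBE !ge_max => -> -> ->. Qed.

Lemma RLBGW_U_ge :
  [/\ t1 <= RLBGW_U p q M, t2 <= RLBGW_U p q M, t3 <= RLBGW_U p q M & t4 <= RLBGW_U p q M].
Proof. by rewrite RLBGW_UE; split; rewrite !le_max lexx ?orbT. Qed.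

Lemma RLBGW_U_le r : t1 <= r -> t2 <= r -> t3 <= r -> t4 <= r -> RLBGW_U p q M <= r.
Proof. by rewrite RLBGW_UE !ge_max => -> -> -> ->. Qed.

Lemma RLB_le_RLBGW_U : (forall x1 x2, 0 <= p x1 x2) -> is_cond_pmf q ->
  RLB p M <= RLBGW_U p q M.
Proof.
move=> p_ge0 q_cond.
have H12_le := H12_le_I12_U_H1_U_H2_U p_ge0 q_cond.
have H1_le := H1_le_I12_U_H1_U p_ge0 q_cond.
have H2_le := H2_le_I12_U_H2_U p_ge0 q_cond.
have [] := RLBGW_U_ge; rewrite /t1 /t2 /t3 /t4 => t1_le t2_le t3_le t4_le.
apply: RLB_le; rewrite /s1 /s2 /s3; [lra | lra |].
by rewrite maxEle; case: ifP => _; lra.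
Qed.

Lemma markov_RLBGW_U_le (m e : R) :
  (forall x1 x2, 0 <= p x1 x2) -> is_cond_pmf q -> markov_1U2 p q -> 0 <= e ->
  m - e <= Num.min (H1_U p q) (H2_U p q) / 2 -> M <= m \/ H12 p - 2 * m <= M ->
  RLBGW_U p q M <= RLB p M + e.
Proof.
move=> p_ge0 q_cond markov e_ge0 m_le M_range.
have gw_sum := markov_I12_U_H1_U_H2_U p_ge0 q_cond markov.
have min_le1 : Num.min (H1_U p q) (H2_U p q) <= H1_U p q by rewrite ge_min lexx.
have min_le2 : Num.min (H1_U p q) (H2_U p q) <= H2_U p q by rewrite ge_min lexx orbT.
have [] := RLB_ge; rewrite /s1 /s2 => s1_le s2_le _.
by apply: RLBGW_U_le; rewrite /t1 /t2 /t3 /t4; case: M_range; lra.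
Qed.
End RateBounds.

Section Mixtures.
Variables (R : realType) (X1 X2 U : finType) (p : X1 -> X2 -> R) (q : X1 -> X2 -> U -> R).

Lemma markov_of_factorization (f : U -> X1 -> R) (g : U -> X2 -> R) :
  (forall x1 x2 u, P12U p q x1 x2 u = f u x1 * g u x2) -> markov_1U2 p q.
Proof.
move=> fgE x1 x2 u.
have P1UE y1 : P1U p q y1 u = f u y1 * \sum_y2 g u y2.
  by rewrite mulr_sumr; apply: eq_bigr => y2 _; rewrite fgE.
have P2UE y2 : P2U p q y2 u = (\sum_y1 f u y1) * g u y2.
  by rewrite mulr_suml; apply: eq_bigr => y1 _; rewrite fgE.
have PUE : PU p q u = (\sum_y1 f u y1) * \sum_y2 g u y2.
  by rewrite mulr_suml; apply: eq_bigr => y1 _; rewrite -P1UE.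
by rewrite fgE PUE P1UE P2UE; ring.
Qed.

Variables (w : U -> R) (a : U -> X1 -> R) (b : U -> X2 -> R).
Hypothesis w_ge0 : forall u, 0 <= w u.
Hypothesis a_ge0 : forall u x1, 0 <= a u x1.
Hypothesis b_ge0 : forall u x2, 0 <= b u x2.
Hypothesis a_sum1 : forall u, \sum_x1 a u x1 = 1.
Hypothesis b_sum1 : forall u, \sum_x2 b u x2 = 1.
Hypothesis P12U_mix : forall x1 x2 u, P12U p q x1 x2 u = w u * (a u x1 * b u x2).

Lemma mixture_markov : markov_1U2 p q.
Proof.
apply: (markov_of_factorization (f := fun u x1 => w u * a u x1)) => *.
by rewrite P12U_mix mulrA.
Qed.

Let P1U_mix x1 u : P1U p q x1 u = w u * a u x1.
Proof.
by rewrite /P1U; under eq_bigr do rewrite P12U_mix; rewrite -!mulr_sumr b_sum1 mulr1.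
Qed.

Let P2U_mix x2 u : P2U p q x2 u = w u * b u x2.
Proof.
rewrite /P2U; under eq_bigr do rewrite P12U_mix mulrCA.
by rewrite -mulr_suml a_sum1 mul1r.
Qed.

Let PU_mix : PU p q = w.
Proof.
apply/funext => u; rewrite /PU; under eq_bigr do rewrite -/(P1U p q _ u) P1U_mix.
by rewrite -mulr_sumr a_sum1 mulr1.
Qed.

Lemma mixture_H1_U : H1_U p q = \sum_u w u * Hent (a u).
Proof.
rewrite /H1_U /H1U /HU PU_mix.
under eq_fun do rewrite P1U_mix.
by rewrite Hent_mixture // addrAC subrr add0r.
Qed.

Lemma mixture_H2_U : H2_U p q = \sum_u w u * Hent (b u).
Proof.
rewrite /H2_U /H2U /HU PU_mix.
under eq_fun do rewrite P2U_mix.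
by rewrite Hent_mixture // addrAC subrr add0r.
Qed.
End Mixtures.

Section Caratheodory.
Variables (R : realType) (U K : finType) (f : U -> K -> R).

Lemma exists_pos_relation (S : {set U}) : (#|K| < #|S|)%N ->
  exists c : U -> R, [/\ forall u, u \notin S -> c u = 0, exists u, 0 < c u &
    forall k, \sum_u c u * f u k = 0].
Proof.
move=> S_large.
pose A : 'M[R]_(#|S|, #|K|) := \matrix_(i, j) f (enum_val i) (enum_val j).
have ker_neq0 : kermx A != 0.
  by rewrite -mxrank_eq0 mxrank_ker subn_eq0 -ltnNge (leq_ltn_trans (rank_leq_col A)).
have [i [j ker_ij]] : exists i j, kermx A i j != 0.
  case/boolP: [exists i, exists j, kermx A i j != 0] => [/existsP[i /existsP[j]]|].
    by exists i, j.
  move/existsPn => ker0; case/negP: ker_neq0; apply/eqP/matrixP => i j.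
  by rewrite [RHS]mxE; have /existsPn/(_ j)/negPn/eqP := ker0 i.
pose v := row i (kermx A).
have vA0 : v *m A = 0 by rewrite -row_mul mulmx_ker row0.
pose c u := \sum_(l | enum_val l == u) v 0 l.
have c_rel k : \sum_u c u * f u k = 0.
  have := congr1 (fun B : 'rV_#|K| => B 0 (enum_rank k)) vA0.
  rewrite !mxE => vA0k; rewrite -[RHS]vA0k; under eq_bigr do rewrite mulr_suml.
  rewrite (exchange_big_dep xpredT) //=; apply: eq_bigr => l _.
  rewrite (big_pred1 (enum_val l)) => [|u]; last by rewrite /= eq_sym.
  by rewrite !mxE enum_rankK.
have c_out u : u \notin S -> c u = 0.
  by move=> uS; apply: big1 => l /eqP el; move: uS; rewrite -el enum_valP.
have c_nz : c (enum_val j) != 0.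
  rewrite /c (big_pred1 j) => [|l]; first by rewrite mxE.
  by rewrite /= (inj_eq enum_val_inj).
have [c_gt0|c_le0] := ltP 0 (c (enum_val j)).
  by exists c; split=> //; exists (enum_val j).
exists (fun u => - c u); split.
- by move=> u /c_out ->; rewrite oppr0.
- by exists (enum_val j); rewrite oppr_gt0 lt_neqAle c_nz.
- by move=> k; under eq_bigr do rewrite mulNr; rewrite sumrN c_rel oppr0.
Qed.

Lemma caratheodory_step (w : U -> R) : (forall u, 0 <= w u) ->
  (#|K| < #|[set u | w u != 0%R]|)%N ->
  exists w' : U -> R, [/\ forall u, 0 <= w' u,
    forall k, \sum_u w' u * f u k = \sum_u w u * f u k &
    [set u | w' u != 0] \proper [set u | w u != 0]].
Proof.
move=> w_ge0 /exists_pos_relation[c [c_out [u0 c_u0] c_rel]].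
have {}c_out u : w u = 0 -> c u = 0 by move=> wu0; apply: c_out; rewrite inE wu0 eqxx.
pose um := [arg min_(u < u0 | 0 < c u) (w u / c u)]%O.
have [c_um um_min] : 0 < c um /\ forall u, 0 < c u -> w um / c um <= w u / c u.
  by rewrite /um; case: arg_minP.
pose t := w um / c um.
exists (fun u => w u - t * c u); split.
- move=> u; rewrite subr_ge0; have [c_gt0|c_le0] := ltP 0 (c u).
    by rewrite -ler_pdivlMr // um_min.
  exact: le_trans (mulr_ge0_le0 (divr_ge0 (w_ge0 _) (ltW c_um)) c_le0) (w_ge0 u).
- move=> k; under eq_bigr do rewrite mulrBl -mulrA.
  by rewrite sumrB -mulr_sumr c_rel mulr0 subr0.
- apply/properP; split.
    apply/fintype.subsetP => u; rewrite !inE; apply: contra => /eqP wu0.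
    by rewrite wu0 c_out // mulr0 subr0.
  exists um; rewrite !inE; last by rewrite /t divfK ?subrr ?eqxx // gt_eqF.
  by apply: contraTneq c_um => /c_out ->; rewrite ltxx.
Qed.

Lemma caratheodory (w : U -> R) : (forall u, 0 <= w u) ->
  exists w' : U -> R, [/\ forall u, 0 <= w' u,
    forall k, \sum_u w' u * f u k = \sum_u w u * f u k &
    (#|[set u | w' u != 0%R]| <= #|K|)%N].
Proof.
move: {2}#|_| (leqnn #|[set u | w u != 0%R]|) => n.
elim: n w => [|n IH] w w_small w_ge0.
  by exists w; split=> //; apply: leq_trans w_small _.
have [|w_large] := leqP #|[set u | w u != 0]| #|K|; first by exists w.
have [w2 [w2_ge0 w2_mom w2_supp]] := caratheodory_step w_ge0 w_large.
have w2_small : (#|[set u | w2 u != 0%R]| <= n)%N.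
  by rewrite -ltnS (leq_trans (proper_card w2_supp) w_small).
have [w' [w'_ge0 w'_mom w'_supp]] := IH w2 w2_small w2_ge0.
by exists w'; split=> // k; rewrite w'_mom w2_mom.
Qed.
End Caratheodory.

Section SupportRealization.
Variables (R : realType) (X1 X2 U : finType) (p : X1 -> X2 -> R).
Variables (w : U -> R) (a : U -> X1 -> R) (b : U -> X2 -> R).
Hypothesis w_ge0 : forall u, 0 <= w u.
Hypothesis a_ge0 : forall u x1, 0 <= a u x1.
Hypothesis b_ge0 : forall u x2, 0 <= b u x2.
Hypothesis a_sum1 : forall u, \sum_x1 a u x1 = 1.
Hypothesis b_sum1 : forall u, \sum_x2 b u x2 = 1.
Hypothesis p_sum1 : \sum_x1 \sum_x2 p x1 x2 = 1.
Hypothesis p_mix : forall x1 x2, \sum_u w u * (a u x1 * b u x2) = p x1 x2.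

Let S := [set u | w u != 0].
Let V := {u : U | u \in S}.

Let sum_support (F : U -> R) : (forall u, w u = 0 -> F u = 0) ->
  \sum_(v : V) F (val v) = \sum_u F u.
Proof.
move=> F0; rewrite -(big_sub S F) [RHS](bigID (mem S)) /= [X in _ = _ + X]big1 ?addr0 //.
by move=> u; rewrite inE negbK => /eqP /F0.
Qed.

Let w_sum1 : \sum_u w u = 1.
Proof.
rewrite -p_sum1; under [RHS]eq_bigr do under eq_bigr do rewrite -p_mix.
pose F x1 x2 u := w u * (a u x1 * b u x2).
rewrite (sum3E F) (sum3_outer F); apply: eq_bigr => u _.
under eq_bigr do rewrite -mulr_sumr -mulr_sumr b_sum1 mulr1.
by rewrite -mulr_sumr a_sum1 mulr1.
Qed.

(* Where p x1 x2 = 0 any law on V will do; w restricted to V is one. *)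
Let q' x1 x2 (v : V) :=
  if p x1 x2 == 0 then w (val v) else w (val v) * (a (val v) x1 * b (val v) x2) / p x1 x2.

Let q'_cond : is_cond_pmf q'.
Proof.
split=> x1 x2 => [v|]; rewrite /q'; have [p0|p_neq0] := eqVneq (p x1 x2) 0.
- exact: w_ge0.
- by rewrite divr_ge0 ?mulr_ge0 // -(p_mix x1 x2) sumr_ge0 // => u _; rewrite !mulr_ge0.
- by rewrite sum_support.
- rewrite -mulr_suml (sum_support (F := fun u => w u * (a u x1 * b u x2))).
    by rewrite p_mix divff.
  by move=> u ->; rewrite mul0r.
Qed.

Let P12U_mix x1 x2 v :
  P12U p q' x1 x2 v = w (val v) * (a (val v) x1 * b (val v) x2).
Proof.
rewrite /P12U /q'; case: ifPn => [/eqP p0|p_neq0]; last by rewrite mulrC divfK.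
rewrite p0 mul0r; apply/esym/eqP; move/eqP: p0; rewrite -p_mix psumr_eq0 => [/allP|u _].
  by move/(_ (val v)); rewrite mem_index_enum => /implyP; apply.
by rewrite !mulr_ge0.
Qed.

Lemma support_realization : exists (V : finType) (q' : X1 -> X2 -> V -> R),
  [/\ (#|V| <= #|[set u | w u != 0%R]|)%N, is_cond_pmf q', markov_1U2 p q',
      H1_U p q' = \sum_u w u * Hent (a u) & H2_U p q' = \sum_u w u * Hent (b u)].
Proof.
exists V, q'; split=> //.
- by rewrite card_sig; apply/eq_leq/eq_card.
- exact: (mixture_markov P12U_mix).
- rewrite (mixture_H1_U _ (fun v => a_ge0 (val v)) _ _ P12U_mix) //.
  by rewrite (sum_support (F := fun u => w u * Hent (a u))) // => u ->; rewrite mul0r.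
- rewrite (mixture_H2_U _ (fun v => b_ge0 (val v)) _ _ P12U_mix) //.
  by rewrite (sum_support (F := fun u => w u * Hent (b u))) // => u ->; rewrite mul0r.
Qed.
End SupportRealization.

Section MarkovReduction.
Variables (R : realType) (X1 X2 U : finType) (p : X1 -> X2 -> R) (q : X1 -> X2 -> U -> R).
Hypothesis p_pmf : is_pmf2 p.
Hypothesis q_cond : is_cond_pmf q.
Hypothesis markov : markov_1U2 p q.

Let p_ge0 : forall x1 x2, 0 <= p x1 x2. Proof. by case: p_pmf. Qed.
Let p_sum1 : \sum_x1 \sum_x2 p x1 x2 = 1. Proof. by case: p_pmf. Qed.

Let w := PU p q.
(* The conditional laws of X1 and X2 given U = u; any law will do where w u = 0. *)
Let a u x1 := if w u == 0 then P1 p x1 else P1U p q x1 u / w u.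
Let b u x2 := if w u == 0 then P2 p x2 else P2U p q x2 u / w u.

Let w_ge0 u : 0 <= w u.
Proof. by do 2![apply: sumr_ge0 => ? _]; exact: P12U_ge0. Qed.

Let a_ge0 u x1 : 0 <= a u x1.
Proof.
rewrite /a; case: ifP => _; first exact: sumr_ge0.
by rewrite divr_ge0 // sumr_ge0 // => x2 _; exact: P12U_ge0.
Qed.

Let b_ge0 u x2 : 0 <= b u x2.
Proof.
rewrite /b; case: ifP => _; first exact: sumr_ge0.
by rewrite divr_ge0 // sumr_ge0 // => x1 _; exact: P12U_ge0.
Qed.

Let a_sum1 u : \sum_x1 a u x1 = 1.
Proof.
rewrite /a; have [_|w_neq0] := eqVneq (w u) 0; first exact: p_sum1.
by rewrite -mulr_suml divff.
Qed.

Let b_sum1 u : \sum_x2 b u x2 = 1.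
Proof.
rewrite /b; have [_|w_neq0] := eqVneq (w u) 0; first by rewrite /P2 exchange_big.
by rewrite -mulr_suml /P2U exchange_big divff.
Qed.

Let P12U_le_w x1 x2 u : P12U p q x1 x2 u <= w u.
Proof.
have P12U_ge0' := P12U_ge0 p_ge0 q_cond.
apply: (@le_trans _ _ (P1U p q x1 u)).
  by rewrite /P1U (bigD1 x2) //= lerDl sumr_ge0.
by rewrite /w /PU (bigD1 x1) //= lerDl sumr_ge0 // => y1 _; rewrite sumr_ge0.
Qed.

Let P12U_mix x1 x2 u : P12U p q x1 x2 u = w u * (a u x1 * b u x2).
Proof.
rewrite /a /b; have [w0|w_neq0] := eqVneq (w u) 0.
  by rewrite w0 mul0r; apply/eqP; rewrite eq_le -{1}w0 P12U_le_w P12U_ge0.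
by apply: (mulIf w_neq0); rewrite markov; field.
Qed.

Lemma markov_small_alphabet : exists (U' : finType) (q' : X1 -> X2 -> U' -> R),
  [/\ (#|U'| <= #|X1| * #|X2| + 2)%N, is_cond_pmf q', markov_1U2 p q',
      H1_U p q' = H1_U p q & H2_U p q' = H2_U p q].
Proof.
(* |X1| |X2| + 2 linear functionals of the weights must be preserved: p and the
   two conditional entropies. *)
pose f u (k : X1 * X2 + bool) := match k with
  | inl x => a u x.1 * b u x.2
  | inr true => Hent (a u)
  | inr false => Hent (b u) end.
have [w' [w'_ge0 w'_mom w'_supp]] := caratheodory f w_ge0.
have p_mix x1 x2 : \sum_u w' u * (a u x1 * b u x2) = p x1 x2.
  rewrite (w'_mom (inl (x1, x2))) -(sum_P12U p q_cond).
  by apply: eq_bigr => u _; rewrite P12U_mix.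
have [V [q' [V_small q'_cond markov' H1_U_q' H2_U_q']]] :=
  support_realization w'_ge0 a_ge0 b_ge0 a_sum1 b_sum1 p_sum1 p_mix.
exists V, q'; split=> //.
- by rewrite (leq_trans V_small) // (leq_trans w'_supp) // card_sum card_prod card_bool.
- by rewrite H1_U_q' (w'_mom (inr true)) (mixture_H1_U w_ge0 a_ge0 a_sum1 b_sum1 P12U_mix).
- by rewrite H2_U_q' (w'_mom (inr false)) (mixture_H2_U w_ge0 b_ge0 a_sum1 b_sum1 P12U_mix).
Qed.
End MarkovReduction.

Section GrayWynerOptimum.
Variables (R : realType) (X1 X2 : finType) (p : X1 -> X2 -> R).
Hypothesis p_pmf : is_pmf2 p.

Let p_ge0 : forall x1 x2, 0 <= p x1 x2. Proof. by case: p_pmf. Qed.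
Let p_sum1 : \sum_x1 \sum_x2 p x1 x2 = 1. Proof. by case: p_pmf. Qed.

Lemma RLB_le_RLBGW M : RLB p M <= RLBGW p M.
Proof.
apply: lb_le_inf => [|_ [U [q [_ q_cond ->]]]]; last exact: RLB_le_RLBGW_U.
exists (RLBGW_U p (fun _ _ (_ : unit) => 1) M), unit, (fun _ _ _ => 1); split=> //.
- by rewrite card_unit addn2.
- by split=> // x1 x2; rewrite sumr_const card_unit.
Qed.

Lemma RLBGW_le_RLBGW_U M (U : finType) (q : X1 -> X2 -> U -> R) :
  (#|U| <= #|X1| * #|X2| + 2)%N -> is_cond_pmf q -> RLBGW p M <= RLBGW_U p q M.
Proof.
move=> U_small q_cond; apply: ge_inf; last by exists U, q.
by exists (RLB p M) => _ [U' [q' [_ q'_cond ->]]]; exact: RLB_le_RLBGW_U.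
Qed.

Let copy := fun x1 (_ : X2) (u : X1) => (u == x1)%:R : R.

Let copy_cond_pmf : is_cond_pmf copy.
Proof.
split=> [x1 x2 u|x1 x2]; first exact: ler0n.
by rewrite (bigD1 x1) //= /copy eqxx big1 ?addr0 // => u /negbTE ->.
Qed.

Let copy_markov : markov_1U2 p copy.
Proof.
apply: (markov_of_factorization (f := fun u x1 => (u == x1)%:R) (g := fun u x2 => p u x2)).
by move=> x1 x2 u; rewrite /P12U /copy mulrC; case: eqVneq => [->|]; rewrite ?mul0r.
Qed.

Lemma M1_approx e : 0 < e -> exists (U : finType) (q : X1 -> X2 -> U -> R),
  [/\ is_cond_pmf q, markov_1U2 p q & M1 p - e < Num.min (H1_U p q) (H2_U p q) / 2].
Proof.
move=> e_gt0.
pose S := [set v : R | exists (U : finType) (q : X1 -> X2 -> U -> R),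
  [/\ is_cond_pmf q, markov_1U2 p q & v = Num.min (H1_U p q) (H2_U p q) / 2]]%classic.
have S_sup : has_sup S.
  split; first by exists (Num.min (H1_U p copy) (H2_U p copy) / 2), X1, copy.
  exists (H1 p / 2) => _ [U [q [q_cond _ ->]]].
  have := H1_U_le_H1 p_ge0 q_cond p_sum1.
  have : Num.min (H1_U p q) (H2_U p q) <= H1_U p q by rewrite ge_min lexx.
  lra.
have [_ [U [q [q_cond markov ->]]] M1_lt] := sup_adherent e_gt0 S_sup.
by exists U, q.
Qed.
End GrayWynerOptimum.

Theorem theorem3 (R : realType) (X1 X2 : finType) (p : X1 -> X2 -> R)
  (hp : is_pmf2 p) (M : R) :
  (0 <= M <= M1 p \/ H12 p - 2 * M1 p <= M <= H12 p) ->
  RLBGW p M = RLB p M.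
Proof.
move=> M_range; apply/eqP; rewrite eq_le RLB_le_RLBGW // andbT.
apply/ler_addgt0Pr => e e_gt0.
have [U [q [q_cond markov M1_lt]]] := M1_approx hp e_gt0.
have [U' [q' [U'_small q'_cond markov' H1_U_q' H2_U_q']]] :=
  markov_small_alphabet hp q_cond markov.
apply: le_trans (RLBGW_le_RLBGW_U hp M U'_small q'_cond) _.
apply: (markov_RLBGW_U_le (m := M1 p)) => //.
- by case: hp.
- exact: ltW.
- by rewrite H1_U_q' H2_U_q' ltW.
- by case: M_range => /andP[]; [left | right].
Qed.
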